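(* Under the setting described in the context, if $\mathbb P^x(\zeta<\infty)=1$ for every $x$, then $\bigcap_{g\in C_0^{0,1}(\mathbb R^d)}\Gamma_{out}[g]=\partial_0 O$.
   Context: Let $d\ge1$, $\mathbb D^d$ the space of càdlàg paths $[0,\infty)\to\mathbb R^d$, $X_t(\omega)=\omega(t)$. $\{P_t\}$ is a Feller semigroup on $C_0(\mathbb R^d)$ with generator whose domain contains $C_0^\infty(\mathbb R^d)$; $\mathbb P^x$ is the law on $\mathbb D^d$ of the càdlàg Feller process with this semigroup started at $x$, $\mathbb E^x$ its expectation (filtration: natural filtration augmented by all $\mathbb P^\nu$-null sets, intersected over initial laws $\nu$). $O\subset\mathbb R^d$ is a connected bounded open set; $\ell$ is a fixed Lipschitz function vanishing at infinity; $\lambda>0$. $C_0^{0,1}(\mathbb R^d)$ denotes the Lipschitz functions on $\mathbb R^d$ vanishing at infinity. $\tau_B(\omega)=\inf\{t>0:\omega(t)\notin B\}$, $\zeta=\tau_{\bar O}$. For $g\in C_0^{0,1}(\mathbb R^d)$ let $v_g(x)=\mathbb E^x\big[\int_0^\zeta e^{-\lambda s}\ell(X_s)ds+e^{-\lambda\zeta}g(X_\zeta)\big]$ and $\Gamma_{out}[g]=\{x\in\partial O: v_g(x)=g(x)\}$. A point $x$ is regular for $B$ if $\mathbb P^x(\tau_{B^c}=0)=1$; $\partial_0O=\{x\in\partial O: x$ regular for $\bar O^c\}$. *)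

From HB Require Import structures.
From mathcomp Require Import all_boot all_order all_algebra.
From mathcomp Require Import all_classical all_reals all_analysis.
Set Implicit Arguments. Unset Strict Implicit. Unset Printing Implicit Defensive.
Import Order.TTheory GRing.Theory Num.Theory.
Import numFieldNormedType.Exports.
Local Open Scope classical_set_scope.
Local Open Scope ring_scope.

Section Defs.
Context {R : realType} {d : nat}.
Local Notation V := 'rV[R]_d.

Definition vanishes_at_infty (f : V -> R) : Prop :=
  forall e : R, 0 < e -> exists M : R, forall x : V, M < `|x| -> `|f x| < e.

Definition C0 (f : V -> R) : Prop := continuous f /\ vanishes_at_infty f.

Definition C0_lip : set (V -> R) := [set f | lipschitz f /\ vanishes_at_infty f].

Fixpoint Cn (n : nat) (f : V -> R) : Prop :=
  match n with
  | 0 => continuous f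
  | n.+1 => (forall x v : V, derivable f x v) /\ (forall v : V, Cn n ('D_v f))
  end.

Definition Cc_infty (f : V -> R) : Prop :=
  (forall n, Cn n f) /\ compact (closure [set x | f x != 0]).

Record feller_semigroup (P : R -> (V -> R) -> (V -> R)) : Prop := {
  fs_C0 : forall t f, 0 <= t -> C0 f -> C0 (P t f);
  fs_lin : forall t (a : R) f g, 0 <= t -> C0 f -> C0 g ->
    P t (fun x => a * f x + g x) = (fun x => a * P t f x + P t g x);
  fs_pos : forall t f, 0 <= t -> C0 f -> (forall x, 0 <= f x <= 1) ->
    forall x, 0 <= P t f x <= 1;
  fs_0 : forall f, C0 f -> P 0 f = f;
  fs_semi : forall s t f, 0 <= s -> 0 <= t -> C0 f -> P (s + t) f = P s (P t f);
  fs_strong : forall f, C0 f -> forall e : R, 0 < e ->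
    exists delta : R, 0 < delta /\
      forall t x, 0 < t < delta -> `|P t f x - f x| <= e }.

Definition in_generator_domain (P : R -> (V -> R) -> (V -> R)) (f : V -> R) :=
  C0 f /\ exists g, C0 g /\ forall e : R, 0 < e ->
    exists delta : R, 0 < delta /\
      forall t x, 0 < t < delta -> `|(P t f x - f x) / t - g x| <= e.

Definition cadlag (w : R -> V) : Prop :=
  forall t : R, 0 <= t ->
    (w s @[s --> t^'+] --> w t) /\ (0 < t -> cvg (w s @[s --> t^'-])).

Context {dO : measure_display} {Omega : measurableType dO}.

Definition natural_sigma (X : R -> Omega -> V) (s : R) : set (set Omega) :=
  <<s [set A | exists u, 0 <= u <= s /\
                 exists U : set V, open U /\ A = X u @^-1` U] >>.

Definition feller_process (P : R -> (V -> R) -> (V -> R))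
    (X : R -> Omega -> V) (PP : V -> probability Omega R) : Prop :=
  (forall w, cadlag (fun t => X t w)) /\
  (forall t (U : set V), 0 <= t -> open U -> measurable (X t @^-1` U)) /\
  (forall x, PP x [set w | X 0 w = x] = 1%E) /\
  (forall x s t f A, 0 <= s -> s <= t -> C0 f -> natural_sigma X s A ->
     (\int[PP x]_(w in A) (f (X t w))%:E =
      \int[PP x]_(w in A) (P (t - s) f (X s w))%:E)%E).

Definition hit_tau (X : R -> Omega -> V) (B : set V) (w : Omega) : \bar R :=
  ereal_inf [set t%:E | t in [set t : R | 0 < t /\ ~ B (X t w)]].

Definition boundary (O : set V) : set V := closure O `\` interior O.

Definition payoff (X : R -> Omega -> V) (O : set V) (ell : V -> R) (lam : R)
    (g : V -> R) (w : Omega) : R :=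
  let z := hit_tau X (closure O) w in
  Rintegral lebesgue_measure [set s : R | 0 <= s /\ (s%:E < z)%E]
     (fun s => expR (- (lam * s)) * ell (X s w)) +
  (if z is r%:E then expR (- (lam * r)) * g (X r w) else 0).

Definition value_fun (X : R -> Omega -> V) (PP : V -> probability Omega R)
    (O : set V) (ell : V -> R) (lam : R) (g : V -> R) (x : V) : \bar R :=
  \int[PP x]_w (payoff X O ell lam g w)%:E.

Definition Gamma_out X PP O ell lam (g : V -> R) : set V :=
  [set x | boundary O x /\ value_fun X PP O ell lam g x = (g x)%:E].

Definition regular_for (X : R -> Omega -> V) (PP : V -> probability Omega R)
    (B : set V) (x : V) : Prop :=
  PP x [set w | hit_tau X (~` B) w = 0%E] = 1%E.

Definition boundary0 X PP (O : set V) : set V :=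
  [set x | boundary O x /\ regular_for X PP (~` closure O) x].

End Defs.

From HB Require Import structures.
From mathcomp Require Import all_boot all_order all_algebra.
From mathcomp Require Import all_classical all_reals all_analysis.
From mathcomp Require Import ring lra.
From mathcomp Require Import measurable_realfun.
Import Order.TTheory GRing.Theory Num.Theory.
Import numFieldNormedType.Exports.
Local Open Scope classical_set_scope.
Local Open Scope ring_scope.

(* If [x] is regular for the exterior of [closure O], the exit time [zeta]
   vanishes [PP x]-almost surely, so the payoff equals [g (X 0) = g x] almost
   surely and [x] lies in every [Gamma_out g].  Otherwise, for some [b > 0] the
   path stays in [closure O] during [(0, b)] with probability [m > 0]; on that
   event the terminal reward is discounted by at least [exp (- lam b)], so for
   the tent function [g] of height [c] at [x] the value is at most
   [sup |ell| / lam + c - c (1 - exp (- lam b)) m], which is below [g x = c]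
   once [c] is large. *)

(* The payoff is not known to be measurable, so these comparisons make no
   measurability assumption on the integrands. *)
Section integral_nonmeasurable.
Local Open Scope ereal_scope.
Context {d : measure_display} {T : measurableType d} {R : realType}
  (mu : {measure set T -> \bar R}).

Lemma ge0_le_integral_nonmeas (D : set T) (f g : T -> \bar R) :
  (forall x, D x -> 0 <= f x) -> (forall x, D x -> f x <= g x) ->
  \int[mu]_(x in D) f x <= \int[mu]_(x in D) g x.
Proof.
move=> f0 fg.
have g0 x : D x -> 0 <= g x by move=> Dx; exact: le_trans (f0 x Dx) (fg x Dx).
rewrite !ge0_integralE//; apply: ereal_sup_le => _ /= [h hf <-].
exists h => //= x; apply: le_trans (hf x) _.
by rewrite /patch; case: ifP => // /set_mem /fg.
Qed.

Lemma le_integral_nonmeas (D : set T) (f g : T -> \bar R) :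
  (forall x, D x -> 0 <= g x) -> (forall x, D x -> f x <= g x) ->
  \int[mu]_(x in D) f x <= \int[mu]_(x in D) g x.
Proof.
move=> g0 fg; rewrite integralE -[leRHS]sube0; apply: leeB.
  apply: ge0_le_integral_nonmeas => x Dx; first exact: funepos_ge0.
  by rewrite funeposE ge_max g0 // fg.
by apply: integral_ge0 => x _; exact: funeneg_ge0.
Qed.

End integral_nonmeasurable.

Section integral_probability.
Import HBNNSimple.
Local Open Scope ereal_scope.
Context {d : measure_display} {T : measurableType d} {R : realType}
  (P : probability T R).

Lemma probability_setI_eq1 (A B : set T) : measurable A -> measurable B ->
  P A = 1 -> P B = 1 -> P (A `&` B) = 1.
Proof.
move=> mA mB PA PB.
have PC E : measurable E -> P E = 1 -> P (~` E) = 0.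
  by move=> mE PE; rewrite probability_setC // PE subee.
have PCAB : P (~` (A `&` B)) = 0.
  apply/eqP; rewrite eq_le measure_ge0 andbT setCI.
  rewrite -[leRHS](adde0 0) -{1}(PC A mA PA) -(PC B mB PB).
  by apply: measureU2; exact: measurableC.
have := probability_setC P (measurableC (measurableI _ _ mA mB)).
by rewrite setCK PCAB sube0.
Qed.

Lemma ge0_integral_ae_cst (M : set T) (h : T -> \bar R) (k : R) :
  measurable M -> P M = 1 -> (0 <= k)%R -> (forall x, 0 <= h x) ->
  (forall x, M x -> h x = k%:E) -> \int[P]_x h x = k%:E.
Proof.
move=> mM PM k0 h0 hM.
have PC : P (~` M) = 0 by rewrite probability_setC // PM subee.
apply/eqP; rewrite eq_le; apply/andP; split.
- rewrite ge0_integralTE //; apply: ge_ereal_sup => _ /= [s hs <-].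
  rewrite -integralT_nnsfun.
  apply: (@le_trans _ _ (\int[P]_x (cst k%:E x))); last first.
    by rewrite integral_cst // [X in _ * X](_ : _ = 1) ?mule1 //; exact: probability_setT.
  apply: ae_ge0_le_integral => //.
  + by move=> x _; rewrite lee_fin; exact: fun_ge0.
  + by apply/measurable_EFinP; exact: measurable_funP.
  + exists (~` M); split => //; first exact: measurableC.
    by move=> x /= sk Mx; apply: sk => _; rewrite -(hM x Mx).
- apply: (@le_trans _ _ (\int[P]_x ((k * \1_M x)%R)%:E)).
    under eq_integral do rewrite EFinM.
    rewrite ge0_integralZl_EFin //; last exact/measurable_EFinP/measurable_indic.
    by rewrite integral_indic // setIT [X in _ * X](_ : _ = 1) ?mule1.
  apply: ge0_le_integral_nonmeas => x _; first by rewrite lee_fin mulr_ge0.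
  rewrite indicE; case: (pselect (M x)) => Mx.
  + by rewrite mem_set // mulr1 hM.
  + by rewrite memNset // mulr0.
Qed.

Lemma integral_ae_cst (M : set T) (f : T -> R) (c : R) :
  measurable M -> P M = 1 -> (forall x, M x -> f x = c) ->
  \int[P]_x (f x)%:E = c%:E.
Proof.
move=> mM PM fM.
have max_ge0 (r : R) : (0 <= Num.max r 0)%R by rewrite le_max lexx orbT.
rewrite integralE (@ge0_integral_ae_cst M _ _ mM PM (max_ge0 c)); first last.
- by move=> x Mx; rewrite funeposE fM // -EFin_max.
- by move=> x; exact: funepos_ge0.
rewrite (@ge0_integral_ae_cst M _ _ mM PM (max_ge0 (- c)%R)); first last.
- by move=> x Mx; rewrite funenegE fM // -EFinN -EFin_max.
- by move=> x; exact: funeneg_ge0.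
rewrite -EFinB; congr EFin.
case: (leP 0%R c) => c0.
- by rewrite (max_idPr _) ?subr0 // oppr_le0.
- by rewrite (max_idPl _) ?sub0r ?opprK // oppr_ge0 ltW.
Qed.

Lemma integral_cst_add_indic (A : set T) (a b : R) :
  measurable A -> (0 <= a)%R -> (0 <= b)%R ->
  \int[P]_x (a + b * \1_A x)%:E = a%:E + b%:E * P A.
Proof.
move=> mA a0 b0.
have i0 x : 0 <= (\1_A x : R)%:E by rewrite lee_fin indicE; case: (_ \in _).
have mi : measurable_fun setT (EFin \o (\1_A : T -> R)).
  exact/measurable_EFinP/measurable_indic.
under eq_integral do rewrite EFinD EFinM.
rewrite ge0_integralD //; last 2 first.
- by move=> x _; rewrite mule_ge0.
- exact: measurable_funeM.
rewrite integral_cst // [X in _ * X](_ : _ = 1) ?mule1; last exact: probability_setT.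
by rewrite ge0_integralZl_EFin // integral_indic // setIT.
Qed.

End integral_probability.

Section hitting_time.
Context {R : realType} {d : nat} {dO : measure_display} {Omega : measurableType dO}.
Variable X : R -> Omega -> 'rV[R]_d.
Hypothesis Xcadlag : forall w, cadlag (fun t => X t w).
Hypothesis Xmeasurable : forall t U, 0 <= t -> open U -> measurable (X t @^-1` U).
Variable C : set 'rV[R]_d.
Hypothesis closedC : closed C.

Lemma measurable_X_eq t x : 0 <= t -> measurable [set w | X t w = x].
Proof.
move=> t0.
have -> : [set w | X t w = x] = ~` (X t @^-1` ~` [set x]).
  by rewrite preimage_setC setCK.
apply/measurableC/Xmeasurable => //; apply: closed_openC.
exact: (accessible_closed_set1 (hausdorff_accessible (@norm_hausdorff _ _))).
Qed.

Lemma hit_tau_ge0 w : (0 <= hit_tau X C w)%E.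
Proof. by apply/ereal_infP => _ [t [t0 _] <-]; rewrite lee_fin ltW. Qed.

Lemma hit_tau_le t w : 0 < t -> ~ C (X t w) -> (hit_tau X C w <= t%:E)%E.
Proof. by move=> t0 nC; apply: ereal_inf_lbound; exists t. Qed.

Lemma exit_at_rational w (t b : R) : 0 < t -> t < b -> ~ C (X t w) ->
  exists q : rat, [/\ t < ratr q, ratr q < b & ~ C (X (ratr q) w)].
Proof.
move=> t0 tb nC.
have [Xt _] := Xcadlag w t (ltW t0).
have near_exit : \forall s \near t^'+, ~ C (X s w) /\ s < b.
  near=> s; split; last by near: s; exact: nbhs_right_lt.
  by near: s; apply: (Xt (~` C)); apply: open_nbhs_nbhs; split=> //; exact: closed_openC.
have [e /= e0 He] := near_exit.
have [q] : exists q : rat, ratr q \in `]t, t + e[ by apply: rat_in_itvoo; rewrite ltrDl.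
rewrite in_itv /= => /andP[tq qe].
have tq_e : ball_ Num.Def.normr t e (ratr q).
  by rewrite /= distrC ger0_norm ?subr_ge0 ?ltW // ltrBlDr addrC.
by have [? ?] := He _ tq_e tq; exists q.
Unshelve. all: by end_near.
Qed.

(* Rational times make the event measurable; right-continuity of the paths
   makes it equivalent to [b <= hit_tau X C w] ([hit_tau_geP]). *)
Definition stays_before (b : R) : set Omega :=
  [set w | forall q : rat, 0 < ratr q :> R -> ratr q < b -> C (X (ratr q) w)].

Lemma hit_tau_geP b w : (b%:E <= hit_tau X C w)%E <-> stays_before b w.
Proof.
split.
- move=> bz q q0 qb; apply: contrapT => nC.
  have := le_trans bz (hit_tau_le _ _ q0 nC); rewrite lee_fin => /(lt_le_trans qb).
  by rewrite ltxx.
- move=> Sw; apply/ereal_infP => _ [t [t0 nC] <-]; rewrite lee_fin leNgt.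
  apply/negP => tb; have [q [tq qb]] := exit_at_rational _ _ _ t0 tb nC.
  by apply; apply: Sw => //; exact: lt_trans tq.
Qed.

Lemma measurable_stays_before b : measurable (stays_before b).
Proof.
pose F k : set Omega := if (unpickle k : option rat) is Some q then
  (if (0 < (ratr q : R)) && (ratr q < b) then X (ratr q) @^-1` C else setT)
  else setT.
have -> : stays_before b = \bigcap_k F k.
  apply/seteqP; split => w /=.
  - move=> Sw k _; rewrite /F; case: unpickle => [q|] //.
    by case: ifP => // /andP[q0 qb]; exact: Sw.
  - by move=> Fw q q0 qb; have := Fw (pickle q) I; rewrite /F pickleK q0 qb.
apply: bigcapT_measurable => k; rewrite /F; case: unpickle => [q|] //.
case: ifP => // /andP[q0 _].
rewrite -[C]setCK -preimage_setC; apply: measurableC.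
by apply: Xmeasurable; [exact: ltW | exact: closed_openC].
Qed.

Lemma hit_tau_eq0E :
  [set w | hit_tau X C w = 0%E] = ~` \bigcup_n stays_before n.+1%:R^-1.
Proof.
apply/seteqP; split => w /=.
  move=> z0 [n _] /hit_tau_geP; rewrite z0 lee_fin leNgt.
  by rewrite invr_gt0 ltr0n.
move=> nS; have := hit_tau_ge0 w.
case E : (hit_tau X C w) => [r| |] // r0; last first.
  by exfalso; apply: nS; exists 0%N => //; apply/hit_tau_geP; rewrite E leey.
rewrite lee_fin le_eqVlt in r0; case/orP: r0 => [/eqP <- //|r0].
exfalso; apply: nS; exists (Num.truncn r^-1) => //; apply/hit_tau_geP.
rewrite E lee_fin ltW // invf_plt ?posrE ?ltr0n ?invr_gt0 //.
exact: truncnS_gt.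
Qed.

Lemma measurable_hit_tau_eq0 : measurable [set w | hit_tau X C w = 0%E].
Proof.
rewrite hit_tau_eq0E; apply/measurableC/bigcupT_measurable => n.
exact: measurable_stays_before.
Qed.

Lemma probability_hit_tau_eq0 (P : probability Omega R) :
  (forall n, P (stays_before n.+1%:R^-1) = 0%E) ->
  P [set w | hit_tau X C w = 0%E] = 1%E.
Proof.
move=> PS.
have mS n : measurable (stays_before n.+1%:R^-1) by exact: measurable_stays_before.
have mUS := bigcupT_measurable _ mS.
rewrite hit_tau_eq0E probability_setC //.
suff -> : P (\bigcup_n stays_before n.+1%:R^-1) = 0%E by rewrite sube0.
apply/(negligibleP P mUS)/negligible_bigcup => n.
by apply/(negligibleP P (mS n)); exact: PS.
Qed.

End hitting_time.

Lemma ler_dist_max0 (R : realDomainType) (a b : R) :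
  `|Num.max 0 a - Num.max 0 b| <= `|a - b|.
Proof.
case: (leP 0 a) => a0; case: (leP 0 b) => b0.
- by [].
- rewrite subr0 (ger0_norm a0) ger0_norm; lra.
- rewrite sub0r normrN distrC (ger0_norm b0) ger0_norm; lra.
- by rewrite subrr normr0.
Qed.

Section C0_lip.
Context {R : realType} {d : nat}.
Local Notation V := 'rV[R]_d.

Lemma C0_lip_bounded (f : V -> R) : C0_lip f -> exists L, forall y, `|f y| <= L.
Proof.
case=> [[k [_ fk]] fvan].
have k1_gt : `|k| + 1 > k by rewrite (le_lt_trans (ler_norm k)) ?ltrDl.
have {}fk y : `|f y - f 0| <= (`|k| + 1) * `|y|.
  by have := fk _ k1_gt (y, 0); rewrite /self_sub /= subr0; apply.
have [M fM] := fvan 1 ltr01.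
exists (1 + `|f 0| + (`|k| + 1) * `|M|) => y.
have f0_ge0 : 0 <= `|f 0| + (`|k| + 1) * `|M| by rewrite addr_ge0 ?mulr_ge0.
case: (ltP M `|y|) => [/fM|yM]; first lra.
have : `|f y| <= `|f y - f 0| + `|f 0| by rewrite -[in leLHS](subrK (f 0) (f y)) ler_normD.
have : (`|k| + 1) * `|y| <= (`|k| + 1) * `|M|.
  by rewrite ler_wpM2l ?addr_ge0 // (le_trans yM) ?ler_norm.
have := fk y; lra.
Qed.

Definition tent (x0 : V) (c : R) (y : V) : R := c * Num.max 0 (1 - `|y - x0|).

Lemma tent_C0_lip x0 c : 0 <= c -> C0_lip (tent x0 c).
Proof.
move=> c0; split.
- apply: (@klipschitzW _ _ _ c); first exact: (@globally_properfilter _ _ (0, 0)).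
  move=> [y1 y2] _ /=; rewrite /tent -mulrBr normrM (ger0_norm c0) ler_wpM2l //.
  apply: le_trans; first exact: ler_dist_max0.
  rewrite (_ : _ - _ = `|y2 - x0| - `|y1 - x0|); last by ring.
  by apply: le_trans (ler_dist_dist _ _) _; rewrite opprB addrA subrK distrC.
- move=> e e0; exists (`|x0| + 1) => y y_gt.
  rewrite /tent (_ : Num.max 0 _ = 0) ?mulr0 ?normr0 //.
  apply/max_idPl; rewrite subr_le0.
  have : `|y| <= `|y - x0| + `|x0| by rewrite -[in leLHS](subrK x0 y) ler_normD.
  lra.
Qed.

Lemma tent_at x0 c : tent x0 c x0 = c.
Proof. by rewrite /tent subrr normr0 subr0 (max_idPr ler01) mulr1. Qed.

Lemma tent_ge0_le x0 c y : 0 <= c -> 0 <= tent x0 c y <= c.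
Proof.
move=> c0; rewrite /tent mulr_ge0 ?le_max ?lexx //=.
by rewrite -[leRHS]mulr1 ler_wpM2l // ge_max ler01 gerBl.
Qed.

End C0_lip.

Lemma Rintegral_exp_decay_le (R : realType) (L lam : R) (F : R -> R) (D : set R) :
  0 < lam -> 0 <= L -> D `<=` [set s | 0 <= s] ->
  (forall s, D s -> F s <= L * expR (- (lam * s))) ->
  Rintegral lebesgue_measure D F <= L / lam.
Proof.
move=> lam0 L0 D0 FL.
have Llam0 : 0 <= L / lam := divr_ge0 L0 (ltW lam0).
pose G s := ((L / lam) * exponential_pdf lam s)%:E.
have G0 s : (0 <= G s)%E.
  by rewrite lee_fin mulr_ge0 //; apply: exponential_pdf_ge0; exact: ltW.
have FG s : D s -> ((F s)%:E <= G s)%E.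
  move=> Ds; rewrite /G exponential_pdfE ?D0 // lee_fin (le_trans (FL s Ds)) //.
  by rewrite mulrA divfK ?gt_eqF // mulNr.
have intG : (\int[lebesgue_measure]_(s in D) G s <= (L / lam)%:E)%E.
  rewrite integral_mkcond.
  apply: le_trans.
    by apply: (ge0_le_integral_nonmeas lebesgue_measure setT (G \_ D) G) => s _; rewrite /patch; case: ifP.
  rewrite /G; under eq_integral do rewrite EFinM.
  rewrite ge0_integralZl_EFin //.
  - by rewrite integral_exponential_pdf // mule1.
  - by move=> s _; rewrite lee_fin; apply: exponential_pdf_ge0; exact: ltW.
  - by apply/measurable_EFinP; exact: measurable_exponential_pdf.
have := le_trans (le_integral_nonmeas lebesgue_measure D _ G (fun s _ => G0 s) FG) intG.
by rewrite /Rintegral; case: (\int[lebesgue_measure]_(x in D) (F x)%:E)%E.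
Qed.

Section exit_value.
Context {R : realType} {d : nat} {dO : measure_display} {Omega : measurableType dO}.
Variables (X : R -> Omega -> 'rV[R]_d) (PP : 'rV[R]_d -> probability Omega R).
Hypothesis Xcadlag : forall w, cadlag (fun t => X t w).
Hypothesis Xmeasurable : forall t U, 0 <= t -> open U -> measurable (X t @^-1` U).
Hypothesis X0 : forall x, PP x [set w | X 0 w = x] = 1%E.
Variables (O : set 'rV[R]_d) (ell : 'rV[R]_d -> R) (lam L : R).
Hypothesis lam_gt0 : 0 < lam.
Hypothesis ell_le : forall y, `|ell y| <= L.

Local Notation zeta := (hit_tau X (closure O)).
Local Notation stays := (stays_before X (closure O)).
Let closedO : closed (closure O) := @closed_closure _ O.

Let L_div_ge0 : 0 <= L / lam.
Proof. exact: divr_ge0 (le_trans (normr_ge0 _) (ell_le 0)) (ltW lam_gt0). Qed.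

Let discount_le1 r : 0 <= r -> expR (- (lam * r)) <= 1.
Proof. by move=> r0; rewrite expR_le1 oppr_le0 (mulr_ge0 (ltW lam_gt0)). Qed.

Lemma payoff_hit_tau0 g w : zeta w = 0%E -> payoff X O ell lam g w = g (X 0 w).
Proof.
move=> z0; rewrite /payoff /= z0 /= mulr0 oppr0 expR0 mul1r.
suff -> : [set s : R | 0 <= s /\ (s%:E < 0%:E)%E] = set0.
  by rewrite Rintegral_set0 add0r.
by apply/seteqP; split => s //= [s0]; rewrite lte_fin ltNge s0.
Qed.

Lemma value_fun_regular g x : PP x [set w | zeta w = 0%E] = 1%E ->
  value_fun X PP O ell lam g x = (g x)%:E.
Proof.
move=> reg.
have mZ := measurable_hit_tau_eq0 X Xcadlag Xmeasurable _ closedO.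
have mX0 := measurable_X_eq X Xmeasurable 0 x (lexx 0).
rewrite /value_fun; apply: (integral_ae_cst _ _ _ _ (measurableI _ _ mZ mX0)).
  exact: probability_setI_eq1 mZ mX0 reg (X0 x).
by move=> w [/= /payoff_hit_tau0 -> <-].
Qed.

Lemma running_cost_le w :
  Rintegral lebesgue_measure [set s | 0 <= s /\ (s%:E < zeta w)%E]
    (fun s => expR (- (lam * s)) * ell (X s w)) <= L / lam.
Proof.
apply: Rintegral_exp_decay_le => //.
- exact: le_trans (normr_ge0 _) (ell_le 0).
- by move=> s [].
- move=> s _; rewrite mulrC ler_wpM2r ?expR_ge0 //.
  exact: le_trans (ler_norm _) (ell_le _).
Qed.

Lemma payoff_le g c b w : (forall y, 0 <= g y <= c) -> 0 < b ->
  payoff X O ell lam g w <=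
  L / lam + c * expR (- (lam * b)) + c * (1 - expR (- (lam * b))) * \1_(~` stays b) w.
Proof.
move=> g0c b0; rewrite /payoff /= -addrA lerD ?running_cost_le //.
have zeta0 := hit_tau_ge0 X (closure O) w.
have c0 : 0 <= c by have /andP[g0 gc] := g0c 0; exact: le_trans g0 gc.
case: (pselect (stays b w)) => Sw.
- rewrite indicE memNset ?mulr0 ?addr0; last by [].
  have := (hit_tau_geP X Xcadlag _ closedO b w).2 Sw.
  case: (zeta w) zeta0 => [r| |] //= r0 br; last by rewrite mulr_ge0 ?expR_ge0.
  have /andP[g0 gc] := g0c (X r w).
  rewrite lee_fin in br; rewrite mulrC ler_pM ?expR_ge0 // ler_expR lerN2.
  by rewrite ler_wpM2l // ltW.
- rewrite indicE mem_set // mulr1 -mulrDr addrC subrK mulr1.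
  case: (zeta w) zeta0 => [r| |] //= r0.
  have /andP[g0 gc] := g0c (X r w).
  by rewrite -[leRHS]mul1r ler_pM ?expR_ge0 ?discount_le1.
Qed.

Lemma value_fun_le x g c b : (forall y, 0 <= g y <= c) -> 0 < b ->
  (value_fun X PP O ell lam g x <=
   (L / lam + c - c * (1 - expR (- (lam * b))) * fine (PP x (stays b)))%:E)%E.
Proof.
move=> g0c b0.
have c0 : 0 <= c by have /andP[g0 gc] := g0c 0; exact: le_trans g0 gc.
have e0 : 0 <= 1 - expR (- (lam * b)) by rewrite subr_ge0 discount_le1 ?ltW.
have mS := measurable_stays_before X Xmeasurable _ closedO b.
apply: le_trans (le_integral_nonmeas (PP x) setT _
  (fun w => (L / lam + c * expR (- (lam * b)) +
             c * (1 - expR (- (lam * b))) * \1_(~` stays b) w)%:E) _ _) _.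
- by move=> w _; rewrite lee_fin !addr_ge0 // ?mulr_ge0 ?expR_ge0 //.
- by move=> w _; rewrite lee_fin; exact: payoff_le.
have a0 : 0 <= L / lam + c * expR (- (lam * b)) by rewrite addr_ge0 // mulr_ge0 ?expR_ge0.
rewrite (integral_cst_add_indic _ _ _ _ (measurableC mS) a0 (mulr_ge0 c0 e0)).
rewrite probability_setC // -[PP x (stays b)]fineK ?fin_num_measure //.
by rewrite -EFinB -EFinM -EFinD lee_fin le_eqVlt; apply/orP; left; apply/eqP; ring.
Qed.

Lemma tent_notin_Gamma_out x b : 0 < b -> (0 < PP x (stays b))%E ->
  exists2 c, 0 <= c & ~ Gamma_out X PP O ell lam (tent x c) x.
Proof.
move=> b0 Sb_gt0.
set del := 1 - expR (- (lam * b)); set m := fine (PP x (stays b)).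
have del_gt0 : 0 < del by rewrite subr_gt0 expR_lt1 oppr_lt0 mulr_gt0.
have mS := measurable_stays_before X Xmeasurable _ closedO b.
have m_gt0 : 0 < m by rewrite -lte_fin /m fineK ?fin_num_measure.
pose c := (L / lam + 1) / (del * m).
have c0 : 0 <= c by rewrite divr_ge0 ?addr_ge0 // mulr_ge0 ?ltW.
exists c => // -[_ vc].
have := value_fun_le x _ _ _ (fun y => tent_ge0_le x c y c0) b0.
have -> : c * del * m = L / lam + 1.
  by rewrite /c; field; rewrite !gt_eqF.
rewrite vc tent_at lee_fin; lra.
Qed.

Theorem bigcap_Gamma_out :
  \bigcap_(g in C0_lip) Gamma_out X PP O ell lam g = boundary0 X PP O.
Proof.
apply/seteqP; split => x.
- move=> Gx; have [bx _] := Gx _ (tent_C0_lip x _ (lexx 0)); split => //.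
  rewrite /regular_for setCK.
  apply: (probability_hit_tau_eq0 _ Xcadlag Xmeasurable _ closedO) => n.
  apply/eqP; rewrite eq_le measure_ge0 andbT leNgt; apply/negP => stays_gt0.
  have b0 : 0 < n.+1%:R^-1 :> R by rewrite invr_gt0 ltr0n.
  have [c c0 notG] := tent_notin_Gamma_out _ _ b0 stays_gt0.
  exact/notG/Gx/tent_C0_lip.
- move=> [bx reg] g _; split => //.
  by apply: value_fun_regular; rewrite /regular_for setCK in reg.
Qed.

End exit_value.

Theorem lemmaA1 (R : realType) (d : nat) (hd : (1 <= d)%N)
  (P : R -> ('rV[R]_d -> R) -> ('rV[R]_d -> R))
  (hP : feller_semigroup P)
  (hgen : forall f, Cc_infty f -> in_generator_domain P f)
  (dO : measure_display) (Omega : measurableType dO)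
  (X : R -> Omega -> 'rV[R]_d) (PP : 'rV[R]_d -> probability Omega R)
  (hX : feller_process P X PP)
  (O : set 'rV[R]_d) (hOo : open O) (hOc : connected O) (hOb : bounded_set O)
  (ell : 'rV[R]_d -> R) (hell : C0_lip ell) (lam : R) (hlam : 0 < lam)
  (hfin : forall x, PP x [set w | (hit_tau X (closure O) w < +oo)%E] = 1%E) :
  \bigcap_(g in C0_lip) Gamma_out X PP O ell lam g = boundary0 X PP O.
Proof.
have [Xcadlag [Xmeasurable [X0 _]]] := hX.
have [L ell_le] := C0_lip_bounded _ hell.
exact: (bigcap_Gamma_out _ _ Xcadlag Xmeasurable X0 O _ _ _ hlam ell_le).
Qed.
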